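(* $$\sum_{n=1}^\infty \frac{H_n \binom{2n}{n}}{(2n+1)\, 2^{2n}} = 4G - \pi\log 2,$$ where $G$ is Catalan's constant.
   Context: $H_n=\sum_{k=1}^n \frac{1}{k}$ denotes the $n$-th harmonic number and $\binom{2n}{n}$ the central binomial coefficient; $G=\sum_{n=0}^\infty \frac{(-1)^n}{(2n+1)^2}$ is Catalan's constant; $\log$ is the natural logarithm. *)

From Stdlib Require Import Reals.
From Coquelicot Require Import Coquelicot.
Open Scope R_scope.

Definition harmonic (n : nat) : R :=
  sum_n_m (fun k : nat => / INR k) 1 n.

Definition central_binom (n : nat) : R := Binomial.C (2 * n) n.

Definition catalan : R :=
  Series (fun n : nat => (-1) ^ n / (INR (2 * n + 1)) ^ 2).

Definition term (n : nat) : R :=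
  harmonic n * central_binom n / (INR (2 * n + 1) * 2 ^ (2 * n)).

From Stdlib Require Import Reals Lra Lia Psatz.
From Coquelicot Require Import Coquelicot.
Open Scope R_scope.

(* Write c_n = binom(2n,n)/4^n, f(z) = sum c_n z^n and h(z) = sum H_n c_n z^n.  The
   recursions for c_n and H_n give first-order linear differential equations for f and h,
   which the substitution z = x^2, x = 2u/(1+u^2) integrates in closed form:
   f = (1+u^2)/(1-u^2) and h = -2 ln(1-u^2) (1+u^2)/(1-u^2).  Since (2n+1) term_n = H_n c_n,
   Q(u) = x * sum term_n x^(2n) satisfies Q'(u) = -4 ln(1-u^2)/(1+u^2).  After u = (1-w)/(1+w)
   this derivative is elementary except for ln w/(1+w^2) and ln(1+w)/(1+w^2), whose
   primitives are the inverse tangent integral Ti2 (with Ti2(1) = G by Abel's theorem) and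
   Serret's integral (equal to pi ln 2/8 on [0,1]).  Comparing w -> 1 (u = 0) with w -> 0
   gives Q(u) -> 4G - pi ln 2 as u -> 1, and for nonnegative terms the Abel limit is the sum. *)

Lemma harmonic_0 : harmonic 0 = 0.
Proof. unfold harmonic. rewrite sum_n_m_zero; [reflexivity | lia]. Qed.

Lemma harmonic_S n : harmonic (S n) = harmonic n + / INR (S n).
Proof. unfold harmonic. rewrite sum_n_Sm; [reflexivity | lia]. Qed.

Lemma harmonic_bounds n : 0 <= harmonic n <= INR n.
Proof.
  induction n as [|n IH].
  - rewrite harmonic_0. simpl. lra.
  - rewrite harmonic_S, S_INR.
    assert (0 < / (INR n + 1) <= 1).
    { pose proof (pos_INR n). split; [apply Rinv_0_lt_compat; lra|].
      rewrite <- Rinv_1. apply Rinv_le_contravar; lra. }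
    lra.
Qed.

Definition scaled_binom (n : nat) : R := central_binom n / 2 ^ (2 * n).
Definition harmonic_binom (n : nat) : R := harmonic n * scaled_binom n.

Lemma scaled_binom_0 : scaled_binom 0 = 1.
Proof. unfold scaled_binom, central_binom, Binomial.C. simpl. field. Qed.

Lemma scaled_binom_S n :
  scaled_binom (S n) = scaled_binom n * (2 * INR n + 1) / (2 * INR n + 2).
Proof.
  unfold scaled_binom, central_binom, Binomial.C.
  replace (2 * S n)%nat with (S (S (2 * n))) by lia.
  replace (S (S (2 * n)) - S n)%nat with (S n) by lia.
  replace (2 * n - n)%nat with n by lia.
  rewrite !fact_simpl, !mult_INR, !S_INR, !mult_INR.
  replace (2 ^ S (S (2 * n))) with (4 * 2 ^ (2 * n)) by (simpl; ring).
  pose proof (INR_fact_lt_0 n). pose proof (INR_fact_lt_0 (2 * n)).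
  assert (0 < 2 ^ (2 * n)) by (apply pow_lt; lra).
  pose proof (pos_INR n).
  simpl INR. field. repeat split; lra.
Qed.

Lemma scaled_binom_bounds n : 0 < scaled_binom n <= 1.
Proof.
  induction n as [|n IH].
  - rewrite scaled_binom_0; lra.
  - rewrite scaled_binom_S. pose proof (pos_INR n). split.
    + apply Rdiv_lt_0_compat; nra.
    + apply Rmult_le_reg_r with (2 * INR n + 2); [lra|].
      field_simplify; nra.
Qed.

Lemma harmonic_binom_bounds n : 0 <= harmonic_binom n <= INR n.
Proof.
  unfold harmonic_binom. destruct (harmonic_bounds n), (scaled_binom_bounds n). nra.
Qed.

Lemma term_harmonic_binom n : term n = harmonic_binom n / (2 * INR n + 1).
Proof.
  unfold term, harmonic_binom, scaled_binom. rewrite plus_INR, mult_INR. simpl INR.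
  assert (0 < 2 ^ (2 * n)) by (apply pow_lt; lra). pose proof (pos_INR n).
  field. lra.
Qed.

Lemma term_bounds n : 0 <= term n <= 1.
Proof.
  rewrite term_harmonic_binom. destruct (harmonic_binom_bounds n). pose proof (pos_INR n).
  split.
  - apply Rdiv_le_0_compat; lra.
  - apply Rmult_le_reg_r with (2 * INR n + 1); [lra|]. field_simplify; lra.
Qed.

Definition radius_ge1 (a : nat -> R) : Prop := Rbar_le 1 (CV_radius a).

Lemma radius_ge1_ext a b : (forall n, a n = b n) -> radius_ge1 a -> radius_ge1 b.
Proof. intros H. unfold radius_ge1. rewrite (CV_radius_ext a b H). auto. Qed.

Lemma radius_ge1_bounded a M : (forall n, Rabs (a n) <= M) -> radius_ge1 a.
Proof.
  intros H. apply (CV_radius_bounded a). exists M. intros n.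
  rewrite pow1, Rmult_1_r. auto.
Qed.

Lemma radius_ge1_lt a z : radius_ge1 a -> Rabs z < 1 -> Rbar_lt (Rabs z) (CV_radius a).
Proof.
  unfold radius_ge1. destruct (CV_radius a) as [r| |]; simpl; intros; lra || auto.
Qed.

Lemma radius_ge1_ex_pseries a z : radius_ge1 a -> Rabs z < 1 -> ex_pseries a z.
Proof. intros; apply CV_radius_inside, radius_ge1_lt; auto. Qed.

Lemma radius_ge1_derive a : radius_ge1 a -> radius_ge1 (PS_derive a).
Proof. unfold radius_ge1. rewrite CV_radius_derive. auto. Qed.

Lemma radius_ge1_incr_1 a : radius_ge1 a -> radius_ge1 (PS_incr_1 a).
Proof. unfold radius_ge1. rewrite CV_radius_incr_1. auto. Qed.

Lemma radius_ge1_decr_1 a : radius_ge1 a -> radius_ge1 (PS_decr_1 a).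
Proof. unfold radius_ge1. rewrite CV_radius_decr_1. auto. Qed.

Lemma radius_ge1_scal c a : radius_ge1 a -> radius_ge1 (PS_scal c a).
Proof.
  intros Ha. destruct (Req_dec c 0) as [->|Hc].
  - apply radius_ge1_bounded with 0. intros n.
    unfold PS_scal, scal; simpl; unfold mult; simpl. rewrite Rmult_0_l, Rabs_R0. lra.
  - unfold radius_ge1. rewrite CV_radius_scal; auto.
Qed.

Lemma PSeries_lin al a be b z : radius_ge1 a -> radius_ge1 b -> Rabs z < 1 ->
  al * PSeries a z + be * PSeries b z = PSeries (fun n => al * a n + be * b n) z.
Proof.
  intros Ha Hb Hz.
  rewrite <- (PSeries_scal al a), <- (PSeries_scal be b), <- PSeries_plus.
  - reflexivity.
  - apply radius_ge1_ex_pseries, Hz. apply radius_ge1_scal, Ha.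
  - apply radius_ge1_ex_pseries, Hz. apply radius_ge1_scal, Hb.
Qed.

Definition PS_euler (a : nat -> R) (n : nat) : R := INR n * a n.

Lemma PS_incr_1_derive a n : PS_incr_1 (PS_derive a) n = PS_euler a n.
Proof.
  destruct n; unfold PS_euler, PS_derive; simpl; [rewrite Rmult_0_l|]; reflexivity.
Qed.

Lemma radius_ge1_euler a : radius_ge1 a -> radius_ge1 (PS_euler a).
Proof.
  intros. apply radius_ge1_ext with (PS_incr_1 (PS_derive a)); [apply PS_incr_1_derive|].
  apply radius_ge1_incr_1, radius_ge1_derive; auto.
Qed.

Lemma PSeries_euler a z : z * PSeries (PS_derive a) z = PSeries (PS_euler a) z.
Proof. rewrite <- PSeries_incr_1. apply PSeries_ext, PS_incr_1_derive. Qed.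

Lemma radius_ge1_linear_bound a : (forall n, Rabs (a n) <= INR (S n)) -> radius_ge1 a.
Proof.
  intros Ha.
  set (d n := match n with O => 0 | S m => a m / INR (S m) end).
  apply radius_ge1_ext with (PS_derive d).
  - intros n. unfold PS_derive, d. field. apply not_0_INR. lia.
  - apply radius_ge1_derive, radius_ge1_bounded with 1. intros [|n]; unfold d.
    + rewrite Rabs_R0; lra.
    + assert (0 < INR (S n)) by (apply lt_0_INR; lia).
      rewrite Rabs_div, (Rabs_right (INR (S n))) by lra.
      apply Rmult_le_reg_r with (INR (S n)); [lra|]. field_simplify; [|lra].
      apply Ha.
Qed.

(** * Differential equations of the generating functions *)

Lemma radius_ge1_scaled_binom : radius_ge1 scaled_binom.
Proof.
  apply radius_ge1_bounded with 1. intros n.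
  destruct (scaled_binom_bounds n). rewrite Rabs_right; lra.
Qed.

Lemma radius_ge1_harmonic_binom : radius_ge1 harmonic_binom.
Proof.
  apply radius_ge1_linear_bound. intros n.
  destruct (harmonic_binom_bounds n). rewrite S_INR, Rabs_right; lra.
Qed.

Lemma radius_ge1_term : radius_ge1 term.
Proof.
  apply radius_ge1_bounded with 1. intros n.
  destruct (term_bounds n). rewrite Rabs_right; lra.
Qed.

Lemma scaled_binom_ode z : Rabs z < 1 ->
  (1 - z) * PSeries (PS_derive scaled_binom) z = / 2 * PSeries scaled_binom z.
Proof.
  intros Hz.
  replace ((1 - z) * PSeries (PS_derive scaled_binom) z) with
    (1 * PSeries (PS_derive scaled_binom) z + (-1) * (z * PSeries (PS_derive scaled_binom) z))
    by ring.
  rewrite PSeries_euler, PSeries_lin, <- PSeries_scal; auto.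
  - apply PSeries_ext. intros n.
    unfold PS_derive, PS_euler, PS_scal. rewrite scaled_binom_S, S_INR.
    change (scal (/ 2) (scaled_binom n)) with (/ 2 * scaled_binom n).
    field. pose proof (pos_INR n). lra.
  - apply radius_ge1_derive, radius_ge1_scaled_binom.
  - apply radius_ge1_euler, radius_ge1_scaled_binom.
Qed.

Lemma harmonic_binom_ode z : Rabs z < 1 ->
  (1 - z) * PSeries (PS_euler harmonic_binom) z
  = / 2 * (z * PSeries harmonic_binom z) + (PSeries scaled_binom z - 1).
Proof.
  intros Hz.
  rewrite (PSeries_decr_1 scaled_binom z), scaled_binom_0
    by (apply radius_ge1_ex_pseries; auto; apply radius_ge1_scaled_binom).
  replace (1 + z * PSeries (PS_decr_1 scaled_binom) z - 1)
    with (1 * (z * PSeries (PS_decr_1 scaled_binom) z)) by ring.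
  replace ((1 - z) * PSeries (PS_euler harmonic_binom) z) with
    (1 * PSeries (PS_euler harmonic_binom) z + (-1) * (z * PSeries (PS_euler harmonic_binom) z))
    by ring.
  rewrite <- !PSeries_incr_1, !PSeries_lin; auto.
  - apply PSeries_ext. intros [|n]; unfold PS_euler, PS_decr_1, PS_incr_1.
    + change zero with 0. simpl. ring.
    + unfold harmonic_binom. rewrite harmonic_S, scaled_binom_S, !S_INR.
      field. pose proof (pos_INR n). lra.
  - apply radius_ge1_incr_1, radius_ge1_harmonic_binom.
  - apply radius_ge1_incr_1, radius_ge1_decr_1, radius_ge1_scaled_binom.
  - apply radius_ge1_euler, radius_ge1_harmonic_binom.
  - apply radius_ge1_incr_1, radius_ge1_euler, radius_ge1_harmonic_binom.
Qed.

Lemma term_ode z : Rabs z < 1 ->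
  PSeries term z + 2 * (z * PSeries (PS_derive term) z) = PSeries harmonic_binom z.
Proof.
  intros Hz.
  rewrite PSeries_euler, <- (Rmult_1_l (PSeries term z)), PSeries_lin; auto.
  - apply PSeries_ext. intros n. unfold PS_euler. rewrite term_harmonic_binom.
    field. pose proof (pos_INR n). lra.
  - apply radius_ge1_term.
  - apply radius_ge1_euler, radius_ge1_term.
Qed.

Lemma is_derive_eq_r (f : R -> R) (x l l' : R) :
  is_derive f x l -> l = l' -> is_derive f x l'.
Proof. intros H <-. exact H. Qed.

Lemma continuity_pt_is_derive (f : R -> R) x l : is_derive f x l -> continuity_pt f x.
Proof.
  intros H. apply continuity_pt_filterlim, (ex_derive_continuous f x). exists l. exact H.
Qed.

Lemma is_derive_0_const (g : R -> R) a b : a <= b ->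
  (forall x, a <= x <= b -> continuity_pt g x) ->
  (forall x, a < x < b -> is_derive g x 0) -> g b = g a.
Proof.
  intros Hab Hc Hd.
  destruct (MVT_gen g a b (fun _ => 0)) as [c [_ Hc']]; [| |lra].
  - intros x Hx. apply Hd. rewrite Rmin_left, Rmax_right in Hx; lra.
  - intros x Hx. apply Hc. rewrite Rmin_left, Rmax_right in Hx; lra.
Qed.

Lemma is_derive_0_const_open (g : R -> R) a b x y :
  (forall t, a < t < b -> is_derive g t 0) -> a < x < b -> a < y < b -> g x = g y.
Proof.
  intros Hd Hx Hy.
  assert (Hc : forall t, a < t < b -> continuity_pt g t)
    by (intros t Ht; eapply continuity_pt_is_derive, Hd, Ht).
  destruct (Rle_dec x y); [symmetry|];
    apply is_derive_0_const; intros; try apply Hc; try apply Hd; lra.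
Qed.

(** * Closed forms under the Weierstrass substitution *)

(* Weierstrass substitution [u = tan (t / 2)]: [sinp u = sin t] and [cosp u = cos t],
   so that [z = zp u] satisfies [sqrt (1 - z) = cosp u]. *)
Definition sinp (u : R) : R := 2 * u / (1 + u ^ 2).
Definition cosp (u : R) : R := (1 - u ^ 2) / (1 + u ^ 2).
Definition zp (u : R) : R := sinp u ^ 2.

Lemma one_plus_sq_pos u : 0 < 1 + u ^ 2.
Proof. nra. Qed.

Lemma one_minus_zp u : 1 - zp u = cosp u ^ 2.
Proof. unfold zp, sinp, cosp. pose proof (one_plus_sq_pos u). field. lra. Qed.

Lemma cosp_pos u : -1 < u < 1 -> 0 < cosp u.
Proof. intros Hu. unfold cosp. pose proof (one_plus_sq_pos u). apply Rdiv_lt_0_compat; nra. Qed.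

Lemma zp_bounds u : -1 < u < 1 -> 0 <= zp u < 1.
Proof.
  intros Hu. pose proof (cosp_pos u Hu). pose proof (one_minus_zp u).
  split; [apply pow2_ge_0 | nra].
Qed.

Lemma zp_abs_lt_1 u : -1 < u < 1 -> Rabs (zp u) < 1.
Proof. intros Hu. destruct (zp_bounds u Hu). rewrite Rabs_right; lra. Qed.

Lemma sinp_bounds u : 0 < u < 1 -> 0 < sinp u < 1.
Proof.
  intros Hu. unfold sinp. pose proof (one_plus_sq_pos u). split.
  - apply Rdiv_lt_0_compat; lra.
  - apply Rmult_lt_reg_r with (1 + u ^ 2); [lra|]. field_simplify; nra.
Qed.

Lemma is_derive_sinp u : is_derive sinp u (2 * (1 - u ^ 2) / (1 + u ^ 2) ^ 2).
Proof.
  unfold sinp. pose proof (one_plus_sq_pos u).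
  auto_derive; simpl in *; [lra | field; lra].
Qed.

Lemma is_derive_cosp u : is_derive cosp u (- 4 * u / (1 + u ^ 2) ^ 2).
Proof.
  unfold cosp. pose proof (one_plus_sq_pos u).
  auto_derive; simpl in *; [lra | field; lra].
Qed.

Lemma is_derive_PSeries_zp a u : radius_ge1 a -> -1 < u < 1 ->
  is_derive (fun t => PSeries a (zp t)) u
    (8 * u * (1 - u ^ 2) / (1 + u ^ 2) ^ 3 * PSeries (PS_derive a) (zp u)).
Proof.
  intros Ha Hu. pose proof (one_plus_sq_pos u).
  apply (is_derive_comp (PSeries a) zp).
  - apply is_derive_PSeries, radius_ge1_lt, zp_abs_lt_1; auto.
  - unfold zp, sinp. auto_derive; simpl in *; [lra | field; lra].
Qed.

(* [PSeries scaled_binom z = 1 / sqrt (1 - z)]. *)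
Lemma scaled_binom_closed u : -1 < u < 1 -> PSeries scaled_binom (zp u) * cosp u = 1.
Proof.
  intros Hu.
  set (g t := PSeries scaled_binom (zp t) * cosp t).
  assert (Hd : forall t, -1 < t < 1 -> is_derive g t 0).
  { intros t Ht.
    eapply is_derive_eq_r.
    { apply (is_derive_mult (fun t => PSeries scaled_binom (zp t)) cosp).
      - apply is_derive_PSeries_zp; [apply radius_ge1_scaled_binom | exact Ht].
      - apply is_derive_cosp.
      - intros; apply Rmult_comm. }
    pose proof (scaled_binom_ode (zp t) (zp_abs_lt_1 t Ht)) as Hode.
    rewrite one_minus_zp in Hode.
    pose proof (cosp_pos t Ht). pose proof (one_plus_sq_pos t).
    set (F := PSeries scaled_binom (zp t)) in *.
    set (D := PSeries (PS_derive scaled_binom) (zp t)) in *.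
    assert (ED : D = F / (2 * cosp t ^ 2)).
    { apply Rmult_eq_reg_l with (cosp t ^ 2); [rewrite Hode; field|]; nra. }
    unfold plus, mult; simpl. rewrite ED. unfold cosp in *. field. split; [lra|nra]. }
  assert (Hg0 : g 0 = 1).
  { unfold g, zp, sinp, cosp. replace ((2 * 0 / (1 + 0 ^ 2)) ^ 2) with 0 by (simpl; field).
    rewrite PSeries_0, scaled_binom_0. simpl; field. }
  rewrite <- Hg0. apply (is_derive_0_const_open g (-1) 1); auto; lra.
Qed.

Lemma zp_neq_0 u : u <> 0 -> zp u <> 0.
Proof.
  intros Hu. pose proof (one_plus_sq_pos u). unfold zp, sinp.
  apply pow_nonzero. unfold Rdiv. apply Rmult_integral_contrapositive.
  split; [lra | apply Rinv_neq_0_compat; lra].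
Qed.

Lemma zp_0 : zp 0 = 0.
Proof. unfold zp, sinp. simpl. field. Qed.

Lemma harmonic_binom_closed u : 0 <= u < 1 ->
  PSeries harmonic_binom (zp u) * cosp u = - 2 * ln (1 - u ^ 2).
Proof.
  intros Hu.
  set (g t := PSeries harmonic_binom (zp t) * cosp t + 2 * ln (1 - t ^ 2)).
  assert (Hg : forall t, -1 < t < 1 -> is_derive g t
      (8 * t * (1 - t ^ 2) / (1 + t ^ 2) ^ 3 * PSeries (PS_derive harmonic_binom) (zp t) * cosp t
       + PSeries harmonic_binom (zp t) * (- 4 * t / (1 + t ^ 2) ^ 2)
       + 2 * (- 2 * t / (1 - t ^ 2)))).
  { intros t Ht.
    apply (is_derive_plus (fun t => PSeries harmonic_binom (zp t) * cosp t)
             (fun t => 2 * ln (1 - t ^ 2))).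
    - apply (is_derive_mult (fun t => PSeries harmonic_binom (zp t)) cosp).
      + apply is_derive_PSeries_zp; [apply radius_ge1_harmonic_binom | exact Ht].
      + apply is_derive_cosp.
      + intros; apply Rmult_comm.
    - auto_derive; simpl; [nra | field; nra]. }
  assert (Hd : forall t, 0 < t < 1 -> is_derive g t 0).
  { intros t Ht. apply (is_derive_eq_r _ _ _ _ (Hg t ltac:(lra))).
    assert (Hz := zp_abs_lt_1 t ltac:(lra)).
    pose proof (PSeries_euler harmonic_binom (zp t)) as Heuler.
    pose proof (harmonic_binom_ode (zp t) Hz) as Hode.
    pose proof (scaled_binom_closed t ltac:(lra)) as Hf.
    pose proof (one_minus_zp t). pose proof (cosp_pos t ltac:(lra)).
    pose proof (zp_neq_0 t ltac:(lra)). pose proof (one_plus_sq_pos t).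
    set (hz := PSeries harmonic_binom (zp t)) in *.
    set (F := PSeries scaled_binom (zp t)) in *.
    set (Dh := PSeries (PS_derive harmonic_binom) (zp t)) in *.
    assert (EDh : Dh = (/ 2 * (zp t * hz) + (F - 1)) / ((1 - zp t) * zp t)).
    { rewrite <- Hode, <- Heuler. field. split; [auto | nra]. }
    assert (EF : F = 1 / cosp t) by (rewrite <- Hf; field; lra).
    rewrite EDh, EF. unfold cosp, zp, sinp in *. field.
    repeat split; nra. }
  assert (Hg0 : g 0 = 0).
  { unfold g. rewrite zp_0, PSeries_0. unfold harmonic_binom. rewrite harmonic_0.
    replace (1 - 0 ^ 2) with 1 by ring. rewrite ln_1. ring. }
  enough (g u = 0) by (unfold g in *; lra).
  rewrite <- Hg0. apply is_derive_0_const; [lra| |].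
  - intros t Ht. eapply continuity_pt_is_derive, Hg. lra.
  - intros t Ht. apply Hd. lra.
Qed.

Definition Qu (u : R) : R := sinp u * PSeries term (zp u).

Lemma is_derive_Qu u : 0 <= u < 1 -> is_derive Qu u (- 4 * ln (1 - u ^ 2) / (1 + u ^ 2)).
Proof.
  intros Hu.
  eapply is_derive_eq_r.
  { apply (is_derive_mult sinp (fun t => PSeries term (zp t))).
    - apply is_derive_sinp.
    - apply is_derive_PSeries_zp; [apply radius_ge1_term | lra].
    - intros; apply Rmult_comm. }
  pose proof (term_ode (zp u) (zp_abs_lt_1 u ltac:(lra))) as Hode.
  pose proof (harmonic_binom_closed u Hu) as Hh.
  pose proof (one_plus_sq_pos u). pose proof (cosp_pos u ltac:(lra)).
  set (P := PSeries term (zp u)) in *.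
  set (DP := PSeries (PS_derive term) (zp u)) in *.
  set (hz := PSeries harmonic_binom (zp u)) in *.
  assert (EP : P = hz - 2 * (zp u * DP)) by lra.
  assert (EH : hz = - 2 * ln (1 - u ^ 2) / cosp u) by (rewrite <- Hh; field; lra).
  set (L := ln (1 - u ^ 2)) in *.
  unfold plus, mult; simpl. rewrite EP, EH. unfold cosp, zp, sinp in *. field.
  repeat split; nra.
Qed.

(** * Serret's integral and the inverse tangent integral *)

Definition cayley (t : R) : R := (1 - t) / (1 + t).

Lemma is_derive_cayley t : -1 < t -> is_derive cayley t (- 2 / (1 + t) ^ 2).
Proof. intros H. unfold cayley. auto_derive; [lra | simpl; field; lra]. Qed.

Lemma cayley_bounds w : 0 < w < 1 -> 0 < cayley w < 1.
Proof.
  intros Hw. unfold cayley. split.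
  - apply Rdiv_lt_0_compat; lra.
  - apply Rmult_lt_reg_r with (1 + w); [lra|]. field_simplify; lra.
Qed.

Lemma cayley_involutive u : -1 < u -> cayley (cayley u) = u.
Proof. intros H. unfold cayley. field. lra. Qed.

Definition serret_integrand (t : R) : R := ln (1 + t) / (1 + t ^ 2).
Definition serret_int (w : R) : R := RInt serret_integrand 0 w.

Lemma continuous_serret_integrand t : -1 < t -> continuous serret_integrand t.
Proof.
  intros H. apply (ex_derive_continuous serret_integrand). unfold serret_integrand.
  auto_derive. simpl. nra.
Qed.

Lemma is_derive_serret_int w : -1 < w -> is_derive serret_int w (serret_integrand w).
Proof.
  intros Hw. apply is_derive_RInt with 0.
  - assert (He : 0 < (w + 1) / 2) by lra.
    exists (mkposreal _ He). intros b Hb.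
    apply Rabs_def2 in Hb. unfold minus, plus, opp in Hb; simpl in Hb.
    apply (RInt_correct serret_integrand), (ex_RInt_continuous serret_integrand).
    intros z Hz. apply continuous_serret_integrand.
    assert (Rmin 0 b > -1) by (unfold Rmin; destruct (Rle_dec 0 b); lra).
    lra.
  - apply continuous_serret_integrand. lra.
Qed.

Lemma serret_int_0 : serret_int 0 = 0.
Proof. unfold serret_int. rewrite RInt_point. reflexivity. Qed.

(* Serret's integral: [w |-> serret_int w - serret_int (cayley w) + ln 2 * atan (cayley w)]
   is constant, and its values at [0] and [1] give the result. *)
Lemma serret_int_1 : serret_int 1 = PI * ln 2 / 8.
Proof.
  set (N w := serret_int w - serret_int (cayley w) + ln 2 * atan (cayley w)).
  assert (HN : forall w, -1 < w -> is_derive N w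
    (serret_integrand w - (- 2 / (1 + w) ^ 2) * serret_integrand (cayley w)
     + ln 2 * ((- 2 / (1 + w) ^ 2) * / (1 + (cayley w)²)))).
  { intros w Hw.
    assert (Hc : -1 < cayley w).
    { unfold cayley. apply Rmult_lt_reg_r with (1 + w); [lra|]. field_simplify; lra. }
    apply (is_derive_plus (fun w => serret_int w - serret_int (cayley w))
             (fun w => ln 2 * atan (cayley w))).
    - apply (is_derive_minus serret_int (fun w => serret_int (cayley w))).
      + apply is_derive_serret_int. lra.
      + apply (is_derive_comp serret_int cayley).
        * apply is_derive_serret_int. exact Hc.
        * apply is_derive_cayley. lra.
    - apply (is_derive_scal (fun w => atan (cayley w))), (is_derive_comp atan cayley).
      + apply is_derive_atan.
      + apply is_derive_cayley. lra. }
  assert (HN0 : N 1 = N 0).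
  { apply is_derive_0_const; [lra| |].
    - intros w Hw. eapply continuity_pt_is_derive, HN. lra.
    - intros w Hw. apply (is_derive_eq_r _ _ _ _ (HN w ltac:(lra))).
      unfold serret_integrand, Rsqr.
      replace (1 + cayley w) with (2 / (1 + w)) by (unfold cayley; field; lra).
      rewrite ln_div by lra. unfold cayley. field. repeat split; nra. }
  unfold N, cayley in HN0.
  replace ((1 - 1) / (1 + 1)) with 0 in HN0 by field.
  replace ((1 - 0) / (1 + 0)) with 1 in HN0 by field.
  rewrite serret_int_0, atan_0, atan_1 in HN0. lra.
Qed.

Definition ti2_coef (n : nat) : R := (-1) ^ n / INR (2 * n + 1) ^ 2.

Definition Ti2 (w : R) : R := w * PSeries ti2_coef (w ^ 2).

Lemma INR_2n1 n : INR (2 * n + 1) = 2 * INR n + 1.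
Proof. rewrite plus_INR, mult_INR. simpl. ring. Qed.

Lemma Rabs_ti2_coef n : Rabs (ti2_coef n) = / (2 * INR n + 1) ^ 2.
Proof.
  unfold ti2_coef. rewrite INR_2n1. pose proof (pos_INR n).
  rewrite Rabs_div, pow_1_abs, Rabs_right; [field| |]; try apply pow_nonzero; try lra.
  apply Rle_ge, pow2_ge_0.
Qed.

Lemma radius_ge1_ti2_coef : radius_ge1 ti2_coef.
Proof.
  apply radius_ge1_bounded with 1. intros n. rewrite Rabs_ti2_coef.
  pose proof (pos_INR n). rewrite <- Rinv_1. apply Rinv_le_contravar; nra.
Qed.

Lemma is_derive_Ti2 w : 0 < w < 1 -> is_derive Ti2 w (atan w / w).
Proof.
  intros Hw.
  assert (Hw2 : Rabs (w ^ 2) < 1) by (rewrite Rabs_right; nra).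
  set (P := PSeries ti2_coef (w ^ 2)). set (D := PSeries (PS_derive ti2_coef) (w ^ 2)).
  eapply is_derive_eq_r.
  { apply (is_derive_mult (fun t => t) (fun t => PSeries ti2_coef (t ^ 2)) w one (2 * w * D)).
    - apply is_derive_id.
    - apply (is_derive_comp (PSeries ti2_coef) (fun t => t ^ 2) w D (2 * w)).
      + apply is_derive_PSeries, radius_ge1_lt; [apply radius_ge1_ti2_coef | exact Hw2].
      + auto_derive; [exact I | ring].
    - intros; apply Rmult_comm. }
  change (1 * P + w * (2 * w * D) = atan w / w).
  assert (E : 1 * P + 2 * (w ^ 2 * D)
              = PSeries (fun n => (-1) ^ n / INR (S (n + n))) (w ^ 2)).
  { unfold P, D. rewrite PSeries_euler, PSeries_lin; auto.
    - apply PSeries_ext. intros n. unfold ti2_coef, PS_euler. rewrite INR_2n1.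
      replace (INR (S (n + n))) with (2 * INR n + 1) by (rewrite S_INR, plus_INR; ring).
      pose proof (pos_INR n). field. lra.
    - apply radius_ge1_ti2_coef.
    - apply radius_ge1_euler, radius_ge1_ti2_coef. }
  rewrite atan_Reals, <- E by (rewrite Rabs_right; lra). field. lra.
Qed.

Definition Phi (w : R) : R := 2 * ln 2 * atan w + atan w * ln w - Ti2 w - 2 * serret_int w.

Lemma is_derive_Phi w : 0 < w < 1 ->
  is_derive Phi w ((2 * ln 2 + ln w - 2 * ln (1 + w)) / (1 + w ^ 2)).
Proof.
  intros Hw. unfold Phi. auto_derive.
  - repeat split; try lra.
    + exists (atan w / w). apply is_derive_Ti2, Hw.
    + exists (serret_integrand w). apply is_derive_serret_int. lra.
  - replace (Derive (fun x => Ti2 x) w) with (atan w / w)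
      by (symmetry; apply is_derive_unique, is_derive_Ti2, Hw).
    replace (Derive (fun x => serret_int x) w) with (serret_integrand w)
      by (symmetry; apply is_derive_unique, is_derive_serret_int; lra).
    unfold serret_integrand. field. split; [nra | lra].
Qed.

Lemma is_derive_Qu_cayley w : 0 < w < 1 ->
  is_derive (fun t => Qu (cayley t)) w (4 * ((2 * ln 2 + ln w - 2 * ln (1 + w)) / (1 + w ^ 2))).
Proof.
  intros Hw. destruct (cayley_bounds w Hw).
  eapply is_derive_eq_r.
  { apply (is_derive_comp Qu cayley).
    - apply is_derive_Qu. lra.
    - apply is_derive_cayley. lra. }
  replace (1 - cayley w ^ 2) with (2 * 2 * w / (1 + w) ^ 2) by (unfold cayley; field; lra).
  rewrite ln_div, !ln_mult, ln_pow; try lra; try nra; try (apply pow_lt; lra).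
  unfold scal; simpl; unfold mult; simpl. unfold cayley. field. repeat split; nra.
Qed.

Lemma filterlim_Rplus {T} {F : (T -> Prop) -> Prop} {FF : Filter F} (f g : T -> R) a b :
  filterlim f F (locally a) -> filterlim g F (locally b) ->
  filterlim (fun t => f t + g t) F (locally (a + b)).
Proof.
  intros Hf Hg. eapply filterlim_comp_2; [exact Hf | exact Hg | apply (filterlim_plus a b)].
Qed.

Lemma filterlim_Rmult {T} {F : (T -> Prop) -> Prop} {FF : Filter F} (f g : T -> R) a b :
  filterlim f F (locally a) -> filterlim g F (locally b) ->
  filterlim (fun t => f t * g t) F (locally (a * b)).
Proof.
  intros Hf Hg. eapply filterlim_comp_2; [exact Hf | exact Hg | apply (filterlim_mult a b)].
Qed.

Lemma filterlim_within_continuous (f : R -> R) (D E : R -> Prop) x y :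
  continuous f x -> f x = y -> locally x (fun t => D t -> E (f t)) ->
  filterlim f (within D (locally x)) (within E (locally y)).
Proof.
  intros Hc <- HDE P HP. specialize (Hc _ HP). unfold filtermap in Hc.
  unfold filtermap, within. generalize (filter_and _ _ Hc HDE).
  apply filter_imp. intros t [H1 H2] Dt. auto.
Qed.

Lemma continuous_at_left (f : R -> R) x : continuous f x ->
  filterlim f (at_left x) (locally (f x)).
Proof. intros Hc. eapply filterlim_filter_le_1; [apply filter_le_within | exact Hc]. Qed.

Lemma continuous_at_right (f : R -> R) x : continuous f x ->
  filterlim f (at_right x) (locally (f x)).
Proof. intros Hc. eapply filterlim_filter_le_1; [apply filter_le_within | exact Hc]. Qed.

Lemma at_left_1_interval : at_left 1 (fun t => 0 < t < 1).
Proof.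
  exists (mkposreal 1 Rlt_0_1). intros t Ht Ht1.
  apply Rabs_def2 in Ht. unfold minus, plus, opp in Ht; simpl in Ht. lra.
Qed.

Lemma sq_at_left_1 : filterlim (fun t => t ^ 2) (at_left 1) (at_left 1).
Proof.
  apply filterlim_within_continuous; [| simpl; ring |].
  - apply (ex_derive_continuous (fun t => t ^ 2)). auto_derive. exact I.
  - exists (mkposreal 1 Rlt_0_1). intros t Ht Ht1.
    apply Rabs_def2 in Ht. unfold minus, plus, opp in Ht; simpl in Ht. nra.
Qed.

Lemma cayley_at_left_1 : filterlim cayley (at_left 1) (at_right 0).
Proof.
  apply filterlim_within_continuous; [| unfold cayley; field |].
  - apply (ex_derive_continuous cayley). unfold cayley. auto_derive. lra.
  - exists (mkposreal 1 Rlt_0_1). intros t Ht Ht1.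
    apply Rabs_def2 in Ht. unfold minus, plus, opp in Ht; simpl in Ht.
    apply cayley_bounds. lra.
Qed.

Lemma atan_le_id w : 0 <= w -> 0 <= atan w <= w.
Proof.
  intros Hw. destruct (Req_dec w 0) as [->|Hne]; [rewrite atan_0; lra|]. split.
  - rewrite <- atan_0. left. apply atan_increasing. lra.
  - destruct (MVT_gen (fun t => t - atan t) 0 w (fun t => 1 - / (1 + t²))) as [c [Hc Heq]].
    + intros x _.
      apply (is_derive_minus (fun t => t) atan); [auto_derive; auto | apply is_derive_atan].
    + intros x _. eapply continuity_pt_is_derive.
      apply (is_derive_minus (fun t => t) atan); [auto_derive; auto | apply is_derive_atan].
    + rewrite Rmin_left, Rmax_right in Hc by lra. rewrite atan_0 in Heq.
      assert (0 <= 1 - / (1 + c²)).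
      { unfold Rsqr.
        assert (/ (1 + c * c) <= 1) by (rewrite <- Rinv_1; apply Rinv_le_contravar; nra).
        lra. }
      nra.
Qed.

Lemma id_mul_ln_at_right_0 : filterlim (fun w => w * ln w) (at_right 0) (locally 0).
Proof.
  assert (H : filterlim (fun w => ln (/ w) / / w) (at_right 0) (locally 0)).
  { apply (filterlim_comp _ _ _ Rinv (fun y => ln y / y) _ (Rbar_locally p_infty)).
    - apply filterlim_Rinv_0_right.
    - apply is_lim_div_ln_p. }
  apply (filterlim_ext_loc (fun w => - (ln (/ w) / / w))).
  - exists (mkposreal 1 Rlt_0_1). intros w _ Hw.
    rewrite ln_Rinv by lra. field. lra.
  - pose proof (filterlim_comp _ _ _ _ Ropp _ _ _ H (filterlim_opp 0)) as Hopp.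
    unfold opp in Hopp; simpl in Hopp. rewrite Ropp_0 in Hopp. exact Hopp.
Qed.

(* Squeezed between [w * ln w] and [0] since [0 <= atan w <= w] and [ln w < 0]. *)
Lemma atan_mul_ln_at_right_0 : filterlim (fun w => atan w * ln w) (at_right 0) (locally 0).
Proof.
  apply (filterlim_le_le (fun w => w * ln w) _ (fun _ => 0) (Finite 0)).
  - exists (mkposreal 1 Rlt_0_1). intros w Hw Hw0.
    apply Rabs_def2 in Hw. unfold minus, plus, opp in Hw; simpl in Hw.
    assert (ln w < 0) by (rewrite <- ln_1; apply ln_increasing; lra).
    destruct (atan_le_id w ltac:(lra)). nra.
  - apply id_mul_ln_at_right_0.
  - apply filterlim_const.
Qed.

Lemma is_lim_seq_inv_S : is_lim_seq (fun n => / INR (S n)) 0.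
Proof.
  assert (H : is_lim_seq (fun n => INR (S n)) p_infty)
    by (apply (is_lim_seq_incr_1 INR p_infty), is_lim_seq_INR).
  exact (is_lim_seq_inv _ _ H ltac:(discriminate)).
Qed.

Lemma radius_ti2_coef : CV_radius ti2_coef = 1.
Proof.
  replace (Finite 1) with (Finite (/ 1)) by (f_equal; field).
  apply CV_radius_finite_DAlembert; [| lra |].
  - intros n Hn. pose proof (Rabs_ti2_coef n) as H. rewrite Hn, Rabs_R0 in H.
    pose proof (pos_INR n).
    assert (0 < / (2 * INR n + 1) ^ 2) by (apply Rinv_0_lt_compat, pow_lt; lra). lra.
  - set (r n := (2 * INR n + 1) / (2 * INR n + 3)).
    apply is_lim_seq_ext with (fun n => r n * r n).
    { intros n. unfold r. pose proof (pos_INR n).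
      rewrite Rabs_div, !Rabs_ti2_coef, S_INR.
      - field. lra.
      - intros H0. pose proof (Rabs_ti2_coef n) as H1. rewrite H0, Rabs_R0 in H1.
        assert (0 < / (2 * INR n + 1) ^ 2) by (apply Rinv_0_lt_compat, pow_lt; lra). lra. }
    replace (Finite 1) with (Rbar_mult 1 1) by (simpl; f_equal; ring).
    assert (Hr : is_lim_seq r 1).
    { apply is_lim_seq_le_le with (fun n => 1 - / INR (S n)) (fun _ => 1).
      - intros n. unfold r. rewrite S_INR. pose proof (pos_INR n). split.
        + apply Rmult_le_reg_r with ((INR n + 1) * (2 * INR n + 3)); [nra|].
          field_simplify; nra.
        + apply Rmult_le_reg_r with (2 * INR n + 3); [lra|]. field_simplify; lra.
      - replace (Finite 1) with (Finite (1 - 0)) by (f_equal; ring).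
        apply is_lim_seq_minus'; [apply is_lim_seq_const | apply is_lim_seq_inv_S].
      - apply is_lim_seq_const. }
    apply is_lim_seq_mult'; exact Hr.
Qed.

(* Comparison with the telescoping series [2 (1/(n+1) - 1/(n+2))]. *)
Lemma ex_series_ti2_coef : ex_series ti2_coef.
Proof.
  apply (@ex_series_le R_AbsRing R_CompleteNormedModule)
    with (fun n => 2 * (/ INR (S n) - / INR (S (S n)))).
  - intros n. change (Rabs (ti2_coef n) <= 2 * (/ INR (S n) - / INR (S (S n)))).
    rewrite Rabs_ti2_coef, !S_INR. pose proof (pos_INR n).
    replace (2 * (/ (INR n + 1) - / (INR n + 1 + 1)))
      with (2 / ((INR n + 1) * (INR n + 2))) by (field; lra).
    apply Rmult_le_reg_r with ((2 * INR n + 1) ^ 2 * ((INR n + 1) * (INR n + 2))); [nra|].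
    field_simplify; nra.
  - apply (ex_series_scal_l 2 (fun n => / INR (S n) - / INR (S (S n)))). exists (/ INR 1 - 0).
    apply (is_lim_seq_ext (fun N => / INR 1 - / INR (S (S N))) _ (/ INR 1 - 0)).
    + intros N. induction N as [|N IH].
      * rewrite sum_O. reflexivity.
      * rewrite sum_Sn, <- IH. unfold plus; simpl. ring.
    + apply is_lim_seq_minus'; [apply is_lim_seq_const|].
      apply (is_lim_seq_incr_1 (fun n => / INR (S n))), is_lim_seq_inv_S.
Qed.

Lemma PSeries_ti2_coef_1 : PSeries ti2_coef 1 = catalan.
Proof. apply Series_ext. intros n. rewrite pow1, Rmult_1_r. reflexivity. Qed.

Lemma Ti2_at_left_1 : filterlim Ti2 (at_left 1) (locally catalan).
Proof.
  rewrite <- (Rmult_1_l catalan).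
  apply filterlim_Rmult; [apply continuous_at_left, continuous_id|].
  rewrite <- PSeries_ti2_coef_1.
  apply (filterlim_comp _ _ _ (fun t => t ^ 2) (PSeries ti2_coef) _ (at_left 1) _ sq_at_left_1).
  pose proof (Abel ti2_coef) as HA. rewrite radius_ti2_coef in HA. apply HA.
  - simpl. lra.
  - exact I.
  - apply ex_series_ext with ti2_coef; [|exact ex_series_ti2_coef].
    intros n. rewrite pow_n_pow, pow1. symmetry. exact (scal_one (ti2_coef n)).
Qed.

Lemma ex_derive_Ti2 w : -1 < w < 1 -> ex_derive Ti2 w.
Proof.
  intros Hw. unfold Ti2. auto_derive.
  apply ex_derive_PSeries, radius_ge1_lt; [apply radius_ge1_ti2_coef|].
  rewrite Rabs_right; nra.
Qed.

Lemma ex_derive_serret_int w : -1 < w -> ex_derive serret_int w.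
Proof. intros Hw. eexists. apply is_derive_serret_int, Hw. Qed.

Lemma Phi_at_right_0 : filterlim Phi (at_right 0) (locally 0).
Proof.
  set (A w := 2 * ln 2 * atan w - Ti2 w - 2 * serret_int w).
  apply (filterlim_ext (fun w => A w + atan w * ln w)); [intros w; unfold A, Phi; ring|].
  replace 0 with (A 0 + 0) at 2 by (unfold A, Ti2; rewrite atan_0, serret_int_0; ring).
  apply filterlim_Rplus; [|exact atan_mul_ln_at_right_0].
  apply continuous_at_right, (ex_derive_continuous A). unfold A. auto_derive.
  repeat split; [apply ex_derive_Ti2 | apply ex_derive_serret_int]; lra.
Qed.

Lemma Phi_at_left_1 : filterlim Phi (at_left 1) (locally (PI * ln 2 / 4 - catalan)).
Proof.
  set (B w := 2 * ln 2 * atan w + atan w * ln w - 2 * serret_int w).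
  apply (filterlim_ext (fun w => B w + - Ti2 w)); [intros w; unfold B, Phi; ring|].
  replace (PI * ln 2 / 4 - catalan) with (B 1 + - catalan)
    by (unfold B; rewrite atan_1, ln_1, serret_int_1; field).
  apply filterlim_Rplus.
  - apply continuous_at_left, (ex_derive_continuous B). unfold B. auto_derive.
    repeat split; try lra. apply ex_derive_serret_int. lra.
  - apply (filterlim_comp _ _ _ Ti2 Ropp _ (locally catalan)); [exact Ti2_at_left_1|].
    apply (filterlim_opp catalan).
Qed.

Lemma Qu_cayley_at_left_1 : filterlim (fun w => Qu (cayley w)) (at_left 1) (locally 0).
Proof.
  replace 0 with (Qu (cayley 1)).
  - apply (continuous_at_left (fun w => Qu (cayley w))).
    apply (ex_derive_continuous (fun w => Qu (cayley w))).
    eexists. apply (is_derive_comp Qu cayley); [apply is_derive_Qu | apply is_derive_cayley];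
      unfold cayley; lra.
  - unfold Qu, cayley, sinp. replace ((1 - 1) / (1 + 1)) with 0 by field. simpl. field.
Qed.

Lemma Qu_cayley w : 0 < w < 1 -> Qu (cayley w) = 4 * catalan - PI * ln 2 + 4 * Phi w.
Proof.
  intros Hw.
  set (g t := Qu (cayley t) - 4 * Phi t).
  assert (Hd : forall t, 0 < t < 1 -> is_derive g t 0).
  { intros t Ht. apply (is_derive_eq_r _ _ _ _
      (is_derive_minus _ _ t _ _ (is_derive_Qu_cayley t Ht)
         (is_derive_scal _ t 4 _ (is_derive_Phi t Ht)))).
    unfold minus, plus, opp, scal; simpl; unfold mult; simpl. ring. }
  assert (Hlim : filterlim g (at_left 1) (locally (0 + - (4 * (PI * ln 2 / 4 - catalan))))).
  { apply filterlim_Rplus; [exact Qu_cayley_at_left_1|].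
    apply (filterlim_comp _ _ _ (fun t => 4 * Phi t) Ropp _
             (locally (4 * (PI * ln 2 / 4 - catalan)))).
    - apply filterlim_Rmult; [apply filterlim_const | exact Phi_at_left_1].
    - apply (filterlim_opp (4 * (PI * ln 2 / 4 - catalan))). }
  assert (Hconst : filterlim g (at_left 1) (locally (g w))).
  { apply (filterlim_ext_loc (fun _ => g w)); [|apply filterlim_const].
    generalize at_left_1_interval. apply filter_imp. intros t Ht.
    apply (is_derive_0_const_open g 0 1); auto. }
  pose proof (filterlim_locally_unique _ _ _ Hlim Hconst) as E.
  unfold g in E. lra.
Qed.

Lemma Qu_at_left_1 : filterlim Qu (at_left 1) (locally (4 * catalan - PI * ln 2)).
Proof.
  apply (filterlim_ext_loc (fun u => 4 * catalan - PI * ln 2 + 4 * Phi (cayley u))).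
  - generalize at_left_1_interval. apply filter_imp. intros u Hu.
    rewrite <- Qu_cayley, cayley_involutive; [reflexivity | lra | apply cayley_bounds, Hu].
  - replace (locally (4 * catalan - PI * ln 2))
      with (locally (4 * catalan - PI * ln 2 + 4 * 0)) by (f_equal; ring).
    apply filterlim_Rplus; [apply filterlim_const|].
    apply filterlim_Rmult; [apply filterlim_const|].
    exact (filterlim_comp _ _ _ cayley Phi _ _ _ cayley_at_left_1 Phi_at_right_0).
Qed.

Lemma zp_at_left_1 : filterlim zp (at_left 1) (at_left 1).
Proof.
  apply filterlim_within_continuous.
  - apply (ex_derive_continuous zp). unfold zp, sinp. auto_derive. nra.
  - unfold zp, sinp. simpl. field.
  - exists (mkposreal 1 Rlt_0_1). intros t Ht Ht1.
    apply Rabs_def2 in Ht. unfold minus, plus, opp in Ht; simpl in Ht.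
    apply zp_bounds. lra.
Qed.

Lemma PSeries_term_zp_at_left_1 :
  filterlim (fun u => PSeries term (zp u)) (at_left 1) (locally (4 * catalan - PI * ln 2)).
Proof.
  apply (filterlim_ext_loc (fun u => Qu u * / sinp u)).
  - generalize at_left_1_interval. apply filter_imp. intros u Hu.
    destruct (sinp_bounds u Hu). unfold Qu. field. lra.
  - replace (4 * catalan - PI * ln 2) with ((4 * catalan - PI * ln 2) * / sinp 1)
      by (unfold sinp; field).
    apply filterlim_Rmult; [exact Qu_at_left_1|].
    apply (continuous_at_left (fun u => / sinp u)), (ex_derive_continuous (fun u => / sinp u)).
    unfold sinp. auto_derive. split; [lra|]. split; [|exact I].
    replace (2 * 1 * / (1 + 1 * (1 * 1))) with 1 by field. lra.
Qed.

(** * Nonnegative series *)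

Lemma sum_n_le_loc (a b : nat -> R) N :
  (forall k, (k <= N)%nat -> a k <= b k) -> sum_n a N <= sum_n b N.
Proof.
  induction N as [|N IH]; intros H.
  - rewrite !sum_O. apply H. lia.
  - rewrite !sum_Sn. apply Rplus_le_compat; [apply IH; intros; apply H|apply H]; lia.
Qed.

Lemma sum_n_nondecr (a : nat -> R) m n :
  (forall k, 0 <= a k) -> (m <= n)%nat -> sum_n a m <= sum_n a n.
Proof.
  intros Ha Hmn. induction Hmn as [|n Hmn IH]; [lra|].
  rewrite sum_Sn. specialize (Ha (S n)). change (sum_n a m <= sum_n a n + a (S n)). lra.
Qed.

Lemma sum_n_le_Series (a : nat -> R) N :
  (forall k, 0 <= a k) -> ex_series a -> sum_n a N <= Series a.
Proof.
  intros Ha He.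
  apply (filterlim_le (F := eventually) (fun _ => sum_n a N) (sum_n a) (sum_n a N) (Series a)).
  - exists N. intros n Hn. apply sum_n_nondecr; auto.
  - apply filterlim_const.
  - apply Series_correct, He.
Qed.

Lemma pow_le_1 y k : 0 <= y <= 1 -> y ^ k <= 1.
Proof. intros Hy. rewrite <- (pow1 k). apply pow_incr. exact Hy. Qed.

Section AbelNonneg.

Variables (a : nat -> R) (phi : R -> R) (l : R).
Hypothesis a_nonneg : forall n, 0 <= a n.
Hypothesis a_radius : radius_ge1 a.
Hypothesis phi_at_left_1 : filterlim phi (at_left 1) (at_left 1).
Hypothesis PSeries_phi_lim : filterlim (fun u => PSeries a (phi u)) (at_left 1) (locally l).

Lemma phi_unit_interval : at_left 1 (fun u => 0 <= phi u < 1).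
Proof.
  apply (phi_at_left_1 (fun y => 0 <= y < 1)).
  generalize at_left_1_interval. apply filter_imp. intros y Hy. lra.
Qed.

Lemma pseries_term_bounds y n : 0 <= y < 1 -> 0 <= a n * y ^ n <= a n.
Proof.
  intros Hy. pose proof (pow_le y n ltac:(lra)). pose proof (pow_le_1 y n ltac:(lra)).
  specialize (a_nonneg n). nra.
Qed.

Lemma ex_series_pseries y : 0 <= y < 1 -> ex_series (fun n => a n * y ^ n).
Proof.
  intros Hy. apply ex_series_ext with (fun n => scal (pow_n y n) (a n)).
  - intros n. rewrite pow_n_pow. apply Rmult_comm.
  - apply radius_ge1_ex_pseries; [exact a_radius | rewrite Rabs_right; lra].
Qed.

Lemma pow_mul_sum_n_le_PSeries y N : 0 <= y < 1 -> y ^ N * sum_n a N <= PSeries a y.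
Proof.
  intros Hy.
  replace (y ^ N * sum_n a N) with (sum_n (fun k => y ^ N * a k) N)
    by apply (sum_n_mult_l (K := R_Ring)).
  eapply Rle_trans; [|apply sum_n_le_Series].
  - apply sum_n_le_loc. intros k Hk. rewrite (Rmult_comm (a k)).
    apply Rmult_le_compat_r; [apply a_nonneg|].
    replace N with (k + (N - k))%nat by lia. rewrite pow_add.
    pose proof (pow_le y k ltac:(lra)). pose proof (pow_le_1 y (N - k) ltac:(lra)). nra.
  - intros k. apply pseries_term_bounds, Hy.
  - apply ex_series_pseries, Hy.
Qed.

Lemma sum_n_le_abel_limit N : sum_n a N <= l.
Proof.
  rewrite <- (Rmult_1_l (sum_n a N)), <- (pow1 N).
  apply (filterlim_le (F := at_left 1) (fun u => phi u ^ N * sum_n a N)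
           (fun u => PSeries a (phi u)) (1 ^ N * sum_n a N) l); [| |exact PSeries_phi_lim].
  - generalize phi_unit_interval. apply filter_imp. intros u Hu.
    apply pow_mul_sum_n_le_PSeries, Hu.
  - apply filterlim_Rmult; [|apply filterlim_const].
    apply (filterlim_comp _ _ _ phi (fun y => y ^ N) _ (locally 1)).
    + eapply filterlim_filter_le_2; [apply filter_le_within | exact phi_at_left_1].
    + apply (ex_derive_continuous (fun y => y ^ N)). auto_derive. exact I.
Qed.

Lemma ex_series_of_abel_limit : ex_series a.
Proof.
  destruct (ex_finite_lim_seq_incr (sum_n a) l) as [s Hs].
  - intros n. apply sum_n_nondecr; [exact a_nonneg | lia].
  - exact sum_n_le_abel_limit.
  - exists s. exact Hs.
Qed.

Lemma is_series_of_abel_limit : is_series a l.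
Proof.
  replace l with (Series a); [apply Series_correct, ex_series_of_abel_limit|].
  apply Rle_antisym.
  - apply (filterlim_le (F := eventually) (sum_n a) (fun _ => l) (Series a) l);
      [| |apply filterlim_const].
    + exists O. intros n _. apply sum_n_le_abel_limit.
    + apply Series_correct, ex_series_of_abel_limit.
  - apply (filterlim_le (F := at_left 1) (fun u => PSeries a (phi u)) (fun _ => Series a)
             l (Series a)); [| exact PSeries_phi_lim | apply filterlim_const].
    generalize phi_unit_interval. apply filter_imp. intros u Hu.
    apply Series_le; [|exact ex_series_of_abel_limit].
    intros n. apply pseries_term_bounds, Hu.
Qed.

End AbelNonneg.

Lemma term_0 : term 0 = 0.
Proof. unfold term. rewrite harmonic_0. unfold Rdiv. ring. Qed.

Theorem mainTheorem6 :
  is_series (fun k : nat => term (S k)) (4 * catalan - PI * ln 2).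
Proof.
  apply is_series_incr_1.
  rewrite term_0. change (is_series term (4 * catalan - PI * ln 2 + 0)). rewrite Rplus_0_r.
  apply (is_series_of_abel_limit term zp).
  - apply term_bounds.
  - apply radius_ge1_term.
  - apply zp_at_left_1.
  - apply PSeries_term_zp_at_left_1.
Qed.
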